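(* Let $S$ be a numerical semigroup, let $\Lambda\subseteq\mathrm{IBetti}(S)$ be nonempty and let $b\in\mathrm{IBetti}(S)\setminus\Lambda$. For $s\in S$ let $q_s$ be the largest integer with $q_sb\le_S s$. Then for every $s\in S$ $$\mathrm B(s;\Lambda\cup\{b\})=\bigcup_{j=0}^{q_s}\Big(\mathrm B(s-jb;\Lambda)+\underbrace{\mathrm I(b)+\cdots+\mathrm I(b)}_{j}\Big),$$ where $+$ denotes Minkowski sum of subsets of $\mathbb N^e$ (the $j=0$ term being $\mathrm B(s;\Lambda)$). In particular, $$|\mathrm B(s;\Lambda\cup\{b\})|\le\sum_{j=0}^{q_s}|\mathrm B(s-jb;\Lambda)|\binom{\mathrm i(b)+j-1}{j}.$$
   Context: A numerical semigroup $S$ is a submonoid of $(\mathbb N,+)$ with finite complement, minimally generated by $\{n_1,\dots,n_e\}$. Write $a\le_S b$ if $b-a\in S$. Let $\varphi:\mathbb N^e\to S$, $\varphi(a)=\sum_ia_in_i$; $\mathrm Z(s)=\varphi^{-1}(s)$. $\nabla_s$ is the graph on $\mathrm Z(s)$ with distinct $x,y$ adjacent iff $x\cdot y\ne0$; $s$ is a Betti element if $\nabla_s$ is disconnected. A factorization $z\in\mathrm Z(s)$ is isolated if $z\cdot x=0$ for all $x\in\mathrm Z(s)\setminus\{z\}$; $\mathrm I(t)$ is the set of isolated factorizations of $t$, $\mathrm i(t)=|\mathrm I(t)|$, and $\mathrm I(\Lambda)=\bigcup_{t\in\Lambda}\mathrm I(t)$. $\mathrm I_s(S)$ is the set of $z\in\mathbb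 N^e$ such that $\varphi(z)$ has exactly one factorization. $\mathrm{IBetti}(S)$ is the set of Betti elements $b$ with $\mathrm I(b)\ne\emptyset$. For $\Lambda\subseteq S$ and $s\in S$, $\mathrm B(s;\Lambda)=\{w+x_1+\cdots+x_l\in\mathrm Z(s): w\in\mathrm I_s(S),\ l\ge0,\ x_1,\dots,x_l\in\mathrm I(\Lambda)\}$. *)

From HB Require Import structures.
From mathcomp Require Import all_boot finmap.
From mathcomp Require Import boolp classical_sets cardinality.
From Stdlib Require Import Relations.

Set Implicit Arguments.
Unset Strict Implicit.
Unset Printing Implicit Defensive.

Local Open Scope classical_set_scope.

Definition fact (e : nat) := {ffun 'I_e -> nat}.

Section Semigroup.
Variables (e : nat) (n : 'I_e -> nat).

Definition addf (x y : fact e) : fact e := [ffun i => x i + y i].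
Definition dotf (x y : fact e) : nat := \sum_(i < e) x i * y i.
Definition phi (z : fact e) : nat := \sum_(i < e) z i * n i.

Definition inS (s : nat) : Prop := exists z : fact e, phi z = s.
Definition leS (a b : nat) : Prop := a <= b /\ inS (b - a).

(* S is a numerical semigroup (finite complement in N) minimally generated
   by {n_1, ..., n_e}: no n_i lies in the monoid generated by the others. *)
Definition numerical_semigroup_min_gens : Prop :=
  (exists N, forall m, N <= m -> inS m) /\
  (forall i : 'I_e, ~ exists z : fact e, z i = 0 /\ phi z = n i).

Definition Z (s : nat) : set (fact e) := [set z | phi z = s].

Definition nabla_adj (s : nat) (x y : fact e) : Prop :=
  Z s x /\ Z s y /\ x <> y /\ dotf x y <> 0.

Definition nabla_connected (s : nat) : Prop :=
  forall x y, Z s x -> Z s y -> clos_refl_trans (fact e) (nabla_adj s) x y.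

Definition Betti (s : nat) : Prop := inS s /\ ~ nabla_connected s.

Definition Iso (t : nat) : set (fact e) :=
  [set z | Z t z /\ forall x, Z t x -> x <> z -> dotf z x = 0].

Definition iso_card (t : nat) : nat := #|` fset_set (Iso t) |.

Definition IsoL (L : set nat) : set (fact e) :=
  [set z | exists t, L t /\ Iso t z].

Definition Is : set (fact e) :=
  [set z | forall x, phi x = phi z -> x = z].

Definition IBetti : set nat := [set b | Betti b /\ Iso b !=set0].

Definition Bset (s : nat) (L : set nat) : set (fact e) :=
  [set z | Z s z /\ exists (w : fact e) (xs : seq (fact e)),
      Is w /\ (forall x, x \in xs -> IsoL L x) /\ z = foldr addf w xs].

End Semigroup.

Definition msum (e : nat) (A B : set (fact e)) : set (fact e) :=
  [set z | exists a b, A a /\ B b /\ z = addf a b].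

Definition msum_iter (e : nat) (A B : set (fact e)) (j : nat) : set (fact e) :=
  iter j (fun X => msum X B) A.

From HB Require Import structures.
From mathcomp Require Import all_boot finmap.
From mathcomp Require Import boolp classical_sets cardinality.

(* A factorization in B(s; Lambda u {b}) is w + x_1 + ... + x_l with w in
   I_s(S) and every x_k isolated for some element of Lambda u {b}.  The
   summands split into those isolated for b and the others, which are
   isolated for elements of Lambda; if there are j of the former, the others
   together with w form an element of B(s - jb; Lambda), and jb <=_S s
   forces j <= q_s.
   Conversely every element of B(s - jb; Lambda) + I(b) + ... + I(b) lies
   in B(s; Lambda u {b}).

   For the bound we describe A + I + ... + I (j copies) as the set of
   foldr addf a xs with a in A and xs a list of length j over I.  Since
   addition is commutative only the multiset of the xs matters, which
   yields the bound |A| * C(|I| + j - 1, j) by induction on an enumeration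
   of I (Pascal's rule).  Finiteness comes from the positivity of the
   generators, so all sets of factorizations of a fixed element are finite;
   the bound then follows by summing over 0 <= j <= q_s. *)

Local Open Scope classical_set_scope.

Section FiniteSetCounting.
Context {T : choiceType}.

Lemma card_fset_set_sub {A B : set T} :
  A `<=` B -> finite_set B -> #|` fset_set A| <= #|` fset_set B|.
Proof.
move=> AB fB; apply: fsubset_leq_card.
by rewrite -fset_set_sub //; apply: sub_finite_set fB.
Qed.

Lemma card_bigcup_le (F : nat -> set T) (q : nat) :
  (forall j, finite_set (F j)) ->
  finite_set [set z | exists2 j, j <= q & F j z] /\
  #|` fset_set [set z | exists2 j, j <= q & F j z]| <=
    \sum_(0 <= j < q.+1) #|` fset_set (F j)|.
Proof.
move=> fF; elim: q => [|q [fq cq]].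
  have -> : [set z | exists2 j, j <= 0 & F j z] = F 0.
    apply/seteqP; split => [z [j]|z F0z]; last by exists 0.
    by rewrite leqn0 => /eqP ->.
  by rewrite big_nat1.
have -> : [set z | exists2 j, j <= q.+1 & F j z] =
          [set z | exists2 j, j <= q & F j z] `|` F q.+1.
  apply/seteqP; split => z /=.
    case=> j; rewrite leq_eqVlt ltnS => /orP [/eqP ->|jq Fz]; first by right.
    by left; exists j.
  by case=> [[j jq Fz]|Fz]; [exists j => //; apply: leqW|exists q.+1].
split; first by rewrite finite_setU.
rewrite big_nat_recr //= fset_setU // cardfsU.
by apply: leq_trans (leq_subr _ _) _; exact: leq_add.
Qed.

Lemma finite_set_enum {A : set T} :
  finite_set A -> A = [set x | x \in enum_fset (fset_set A)].
Proof.
move=> fA; apply/seteqP; split => x /=.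
  by move=> Ax; rewrite in_fset_set // mem_set.
by rewrite in_fset_set // => /set_mem.
Qed.

End FiniteSetCounting.

Section FactorizationArithmetic.
Context {e : nat} {n : 'I_e -> nat}.

Lemma addfE (x y : fact e) i : addf x y i = x i + y i.
Proof. by rewrite ffunE. Qed.

Lemma addfC (x y : fact e) : addf x y = addf y x.
Proof. by apply/ffunP => i; rewrite !addfE addnC. Qed.

Lemma phiD (x y : fact e) : phi n (addf x y) = phi n x + phi n y.
Proof.
by rewrite /phi -big_split; apply: eq_bigr => i _; rewrite addfE mulnDl.
Qed.

Lemma phi_foldr (w : fact e) (xs : seq (fact e)) :
  phi n (foldr (@addf e) w xs) = phi n w + \sum_(x <- xs) phi n x.
Proof.
elim: xs => [|x xs IH] /=; first by rewrite big_nil addn0.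
by rewrite phiD IH big_cons addnCA.
Qed.

Lemma foldr_addf_perm (w : fact e) {xs ys : seq (fact e)} :
  perm_eq xs ys -> foldr (@addf e) w xs = foldr (@addf e) w ys.
Proof.
have sumE zs i : foldr (@addf e) w zs i = w i + \sum_(z <- zs) z i.
  elim: zs => [|z zs IH] /=; first by rewrite big_nil addn0.
  by rewrite addfE IH big_cons addnCA.
by move=> pxy; apply/ffunP => i; rewrite !sumE (perm_big _ pxy).
Qed.

Lemma Iso_phi {t : nat} {x : fact e} : Iso n t x -> phi n x = t.
Proof. by case. Qed.

Lemma phi_sum_Iso {t : nat} {xs : seq (fact e)} :
  (forall x, x \in xs -> Iso n t x) -> \sum_(x <- xs) phi n x = size xs * t.
Proof.
elim: xs => [|x xs IH] Hxs /=; first by rewrite big_nil.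
rewrite big_cons (Iso_phi (Hxs x (mem_head _ _))) IH ?mulSn // => y yxs.
by apply: Hxs; rewrite in_cons yxs orbT.
Qed.

End FactorizationArithmetic.

Section IteratedMinkowskiSums.
Context {e : nat}.

Definition sum_lists (A I : set (fact e)) (j : nat) : set (fact e) :=
  [set z | exists a xs, A a /\ size xs = j /\ (forall x, x \in xs -> I x) /\
     z = foldr (@addf e) a xs].

Lemma sum_lists0 (A I : set (fact e)) : sum_lists A I 0 = A.
Proof.
apply/seteqP; split => [z [a [xs [Aa [/size0nil -> [_ ->]]]]] //|z Az].
by exists z, [::].
Qed.

Lemma msum_iterE (A I : set (fact e)) (j : nat) :
  msum_iter A I j = sum_lists A I j.
Proof.
elim: j => [|j IH]; first by rewrite sum_lists0.
rewrite /msum_iter iterS -/(msum_iter A I j) IH.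
apply/seteqP; split => z /=.
  move=> [y [x [[a [xs [Aa [sz [Ixs ->]]]]] [Ix ->]]]].
  exists a, (x :: xs); split => //; split; first by rewrite /= sz.
  split; last by rewrite /= addfC.
  by move=> u; rewrite in_cons => /orP [/eqP -> //|]; apply: Ixs.
move=> [a [[|x xs] [Aa [//= [sz] [Ixs ->]]]]].
exists (foldr (@addf e) a xs), x; split.
  exists a, xs; split => //; split => //; split => //.
  by move=> u uxs; apply: Ixs; rewrite in_cons uxs orbT.
by split; [apply: Ixs; rewrite mem_head | rewrite addfC].
Qed.

Lemma sum_lists_nil (A : set (fact e)) (j : nat) :
  sum_lists A [set x | x \in [::]] j.+1 = set0.
Proof.
apply/seteqP; split => z //= [a [[|y xs] [_ [//= _ [Hxs _]]]]].
by have := Hxs y (mem_head _ _).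
Qed.

(* Pascal step: a sum either avoids the summand x, or is x plus a shorter
   sum over the same alphabet. *)
Lemma sum_lists_cons (A : set (fact e)) (x : fact e) (l : seq (fact e)) j :
  sum_lists A [set y | y \in x :: l] j.+1 `<=`
  sum_lists A [set y | y \in l] j.+1 `|`
  (addf x @` sum_lists A [set y | y \in x :: l] j).
Proof.
move=> z [a [xs [Aa [sz [Hxs ->]]]]].
have [xxs|xNxs] := boolP (x \in xs).
  right; exists (foldr (@addf e) a (rem x xs)).
    exists a, (rem x xs); split => //; split; first by rewrite size_rem // sz.
    by split => // y /mem_rem /Hxs.
  by rewrite (foldr_addf_perm a (perm_to_rem xxs)).
left; exists a, xs; split => //; split => //; split => // y yxs.
have := Hxs y yxs; rewrite /= in_cons => /orP [/eqP yx|//].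
by move: xNxs; rewrite -yx yxs.
Qed.

Lemma sum_lists_bound {A : set (fact e)} (l : seq (fact e)) (j : nat) :
  finite_set A ->
  finite_set (sum_lists A [set x | x \in l] j) /\
  #|` fset_set (sum_lists A [set x | x \in l] j)| <=
    #|` fset_set A| * 'C(size l + j - 1, j).
Proof.
move=> fA; elim: l j => [|x l IHl] j.
  case: j => [|j]; first by rewrite sum_lists0 bin0 muln1.
  by rewrite sum_lists_nil fset_set0 cardfs0; split => //; exact: finite_set0.
elim: j => [|j [fj cj]]; first by rewrite sum_lists0 bin0 muln1.
have [fl cl] := IHl j.+1.
have fimg : finite_set (addf x @` sum_lists A [set y | y \in x :: l] j).
  exact: finite_image.
have fU : finite_set (sum_lists A [set y | y \in l] j.+1 `|`
                      (addf x @` sum_lists A [set y | y \in x :: l] j)).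
  by rewrite finite_setU.
split; first exact: sub_finite_set (@sum_lists_cons A x l j) fU.
apply: leq_trans (card_fset_set_sub (@sum_lists_cons A x l j) fU) _.
rewrite fset_setU // cardfsU.
apply: leq_trans (leq_subr _ _) _.
have -> : size (x :: l) + j.+1 - 1 = (size l + j).+1 by rewrite /= addSn addnS subn1.
rewrite binS mulnDr fset_set_image //; apply: leq_add.
  by move: cl; rewrite addnS subn1.
apply: leq_trans (leq_imfset_card _ _ _) _.
by move: cj; rewrite /= addSn subn1.
Qed.


End IteratedMinkowskiSums.

Section Decomposition.
Context {e : nat} {n : 'I_e -> nat} {L : set nat} {b : nat}.

Lemma Bset_split {s : nat} {z : fact e} :
  Bset n s (L `|` [set b]) z ->
  exists2 j, leS n (j * b) s &
    sum_lists (Bset n (s - j * b) L) (Iso n b) j z.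
Proof.
move=> [Zz [w [xs [Isw [Hxs zE0]]]]]; subst z.
pose isob := fun x : fact e => `[< Iso n b x >].
set xb := [seq x <- xs | isob x]; set xl := [seq x <- xs | predC isob x].
have pxs : perm_eq (xb ++ xl) xs by rewrite perm_filterC.
have zE : foldr (@addf e) w xs = foldr (@addf e) (foldr (@addf e) w xl) xb.
  by rewrite -foldr_cat; apply: foldr_addf_perm; rewrite perm_sym.
have Ixb x : x \in xb -> Iso n b x.
  by rewrite mem_filter => /andP [/asboolP].
have Ixl x : x \in xl -> IsoL n L x.
  rewrite mem_filter => /andP [/= /asboolP xNb /Hxs [t [[Lt|tb] It]]].
    by exists t.
  by case: xNb; rewrite -tb.
have phi_rest : phi n (foldr (@addf e) w xl) + size xb * b = s.
  have phi_z : phi n (foldr (@addf e) w xs) = s := Zz.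
  by rewrite zE phi_foldr (phi_sum_Iso Ixb) in phi_z.
exists (size xb).
  by split; [rewrite -phi_rest leq_addl | exists (foldr (@addf e) w xl); rewrite -phi_rest addnK].
exists (foldr (@addf e) w xl), xb; rewrite zE.
split; last by [].
by split; [rewrite /Z /= -phi_rest addnK | exists w, xl].
Qed.

Lemma Bset_merge (s j : nat) (z : fact e) :
  j * b <= s -> sum_lists (Bset n (s - j * b) L) (Iso n b) j z ->
  Bset n s (L `|` [set b]) z.
Proof.
move=> jbs [a [xs [[Za [w [ys [Isw [Hys aE]]]]] [sz [Hxs ->]]]]]; subst a.
split.
  have phi_a : phi n (foldr (@addf e) w ys) = s - j * b := Za.
  by rewrite /Z /= phi_foldr (phi_sum_Iso Hxs) sz phi_a subnK.
exists w, (xs ++ ys); split => //; split; last by rewrite foldr_cat.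
move=> x; rewrite mem_cat => /orP [/Hxs Ix|/Hys [t [Lt It]]].
  by exists b; split => //; right.
by exists t; split => //; left.
Qed.

End Decomposition.

Section Finiteness.
Context {e : nat} {n : 'I_e -> nat}.

(* Minimal generators of a numerical semigroup are positive: otherwise
   n_i = 0 would be the empty combination of the other generators. *)
Lemma gens_pos : numerical_semigroup_min_gens n -> forall i, 0 < n i.
Proof.
move=> [_ mingens] i; rewrite lt0n; apply/negP => /eqP ni0; apply: (mingens i).
exists [ffun _ => 0]; rewrite ffunE ni0; split => //.
by rewrite /phi big1 // => k _; rewrite ffunE.
Qed.

(* With positive generators, every element has finitely many factorizations:
   each coordinate of a factorization of t is at most t. *)
Lemma Z_finite (t : nat) : (forall i, 0 < n i) -> finite_set (Z n t).
Proof.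
move=> npos.
pose embed (f : {ffun 'I_e -> 'I_t.+1}) : fact e := [ffun i => val (f i)].
apply: (@sub_finite_set _ _ (embed @` setT)); last first.
  by apply: finite_image; exact: finite_finset.
move=> z Zz; exists [ffun i => inord (z i)] => //.
apply/ffunP => i; rewrite !ffunE /=; apply: inordK; rewrite ltnS.
rewrite -Zz /phi (bigD1 i) //=.
by apply: leq_trans (leq_addr _ _); exact: leq_pmulr.
Qed.

End Finiteness.

Theorem lemma5p12 (e : nat) (n : 'I_e -> nat)
  (hS : numerical_semigroup_min_gens n)
  (L : set nat) (hL : L `<=` IBetti n) (hL0 : L !=set0)
  (b : nat) (hb : IBetti n b) (hbL : ~ L b)
  (s : nat) (hs : inS n s)
  (q : nat) (hq : leS n (q * b) s)
  (hqmax : forall j : nat, leS n (j * b) s -> (j <= q)%N) :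
  Bset n s (L `|` [set b]) =
    [set z | exists2 j : nat, (j <= q)%N &
               msum_iter (Bset n (s - j * b) L) (Iso n b) j z]
  /\
  (#|` fset_set (Bset n s (L `|` [set b])) | <=
     \sum_(0 <= j < q.+1)
        #|` fset_set (Bset n (s - j * b) L) | * 'C(iso_card n b + j - 1, j))%N.
Proof.
have decomp : Bset n s (L `|` [set b]) =
    [set z | exists2 j : nat, (j <= q)%N &
               msum_iter (Bset n (s - j * b) L) (Iso n b) j z].
  apply/seteqP; split => z.
    by case/Bset_split => j /hqmax jq Hz; exists j; rewrite ?msum_iterE.
  case=> j jq; rewrite msum_iterE; apply: Bset_merge.
  by apply: leq_trans hq.1; rewrite leq_mul2r jq orbT.
split => //; rewrite decomp.
have finZ t := Z_finite t (gens_pos hS).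
have finB j : finite_set (Bset n (s - j * b) L).
  by apply: sub_finite_set (finZ (s - j * b)) => x [].
pose l := enum_fset (fset_set (Iso n b)).
have IsoE : Iso n b = [set x | x \in l].
  by apply: finite_set_enum; apply: sub_finite_set (finZ b) => x [].
pose F j := msum_iter (Bset n (s - j * b) L) (Iso n b) j.
have boundF j : finite_set (F j) /\
    #|` fset_set (F j)| <= #|` fset_set (Bset n (s - j * b) L)| * 'C(iso_card n b + j - 1, j).
  by rewrite /F msum_iterE IsoE; exact: sum_lists_bound (finB j).
have [_ cardU] := card_bigcup_le F q (fun j => (boundF j).1).
by apply: leq_trans cardU _; apply: leq_sum => j _; exact: (boundF j).2.
Qed.
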